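(* Let $B,M,K,L$ be positive integers with $N=BM=K$, and let $P>0$, $C>0$. Let $a_{bk}>0$ and define $v_{ij}=a_{\lceil i/M\rceil j}$ for $i=1,\dots,N$, $j=1,\dots,K$. Define $$\sigma_i^2=\frac{1+\frac{P}{L}\sum_{j=1}^K v_{ij}}{2^{C/(ML)}-1},\quad \hat v_{ij}(\tau)=\frac{\tau\frac{P}{L}v_{ij}^2}{\tau\frac{P}{L}v_{ij}+1+\sigma_i^2},\quad \tilde v_{ij}(\tau)=\frac{v_{ij}(1+\sigma_i^2)}{\tau\frac{P}{L}v_{ij}+1+\sigma_i^2},$$ $$\overline v_{ij}(\tau)=\frac{\hat v_{ij}(\tau)}{1+\sigma_i^2+\frac{P}{L}\sum_{\ell=1}^K\tilde v_{i\ell}(\tau)},\qquad \mathbf D_j(\tau)=\mathrm{diag}(\overline v_{1j}(\tau),\dots,\overline v_{Nj}(\tau)).$$ Assume that for every $\tau>0$ the matrix $\overline{\mathbf V}(\tau)=(\overline v_{ij}(\tau))$ is doubly regular, i.e. there is $\mathcal K(\tau)$ with $$\mathcal K(\tau)=\frac1N\sum_{i=1}^N\overline v_{ik}(\tau)=\frac1N\sum_{j=1}^N\overline v_{\ell j}(\tau)\quad\text{for all }k,\ell.$$ Let $\mathbf T_P=\mathbf T(-\frac{L}{KP})$ with $\mathbf T(z)$ as in the context, and $$\overline R(\tau)=\frac1N\sum_{j=1}^K\log\Big(1+\tfrac1K\mathrm{tr}\,\mathbf D_j(\tau)\mathbf T_P\Big)-\frac1N\log\det\Big(\tfrac{L}{KP}\mathbf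 T_P\Big)-\frac1N\sum_{j=1}^K\frac{\frac1K\mathrm{tr}\,\mathbf D_j(\tau)\mathbf T_P}{1+\frac1K\mathrm{tr}\,\mathbf D_j(\tau)\mathbf T_P}.$$ Then $\overline R(\tau)$ is a strictly concave function of $\tau>0$.
   Context: $\log$ is the natural logarithm. Let $\mathbb C_+=\{z\in\mathbb C:\Im z>0\}$ and let $\mathcal S$ be the class of functions $f$ analytic on $\mathbb C\setminus\mathbb R_+$ such that $f(z)\in\mathbb C_+$ and $zf(z)\in\mathbb C_+$ for $z\in\mathbb C_+$, and $\lim_{y\to\infty}-\mathrm{i}y f(\mathrm{i}y)=1$. For fixed $\tau$, $\mathbf T(z)=\mathrm{diag}(t_1(z),\dots,t_N(z))$ denotes the unique solution with $(t_1,\dots,t_N)\in\mathcal S^N$ of $$\mathbf T(z)=\Big(\frac1K\sum_{j=1}^K\frac{\mathbf D_j(\tau)}{1+\frac1K\mathrm{tr}\,\mathbf D_j(\tau)\mathbf T(z)}-z\mathbf I_N\Big)^{-1}.$$ *)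

From HB Require Import structures.
From mathcomp Require Import all_boot all_order all_algebra.
From mathcomp Require Import complex.
From mathcomp Require Import all_classical all_reals all_analysis.
Set Implicit Arguments. Unset Strict Implicit. Unset Printing Implicit Defensive.
Import Order.TTheory GRing.Theory Num.Theory.
Import numFieldNormedType.Exports.
Local Open Scope ring_scope.
Local Open Scope complex_scope.
Local Open Scope classical_set_scope.

(* The complex plane seen as a normed module over itself (for complex
   differentiability and limits). Convertible to R[i]. *)
Definition CC (R : realType) := ((R[i])^o)%type.

Definition notRplus (R : realType) (z : R[i]) : Prop :=
  ~ (complex.Im z = 0 /\ 0 <= complex.Re z).

(* The class S of the paper. Analyticity on the open set C \ R_+ is
   expressed as complex differentiability at every point of it. *)
Definition in_S (R : realType) (f : R[i] -> R[i]) : Prop :=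
  (forall z : R[i], notRplus z -> derivable (f : CC R -> CC R) (z : CC R) 1)
  /\ (forall z : R[i], 0 < complex.Im z -> 0 < complex.Im (f z) /\ 0 < complex.Im (z * f z))
  /\ ((fun y : R => (- 'i * y%:C * f ('i * y%:C) : CC R)) @ +oo
        --> (1 : CC R)).

(* v_{ij} = a_{ceil(i/M), j}  (0-indexed: block index i %/ M) *)
Definition vv (R : realType) (M : nat) (a : nat -> nat -> R) (i j : nat) : R :=
  a (i %/ M)%N j.

Definition sigma2 (R : realType) (M K L : nat) (P C : R) (a : nat -> nat -> R)
  (i : nat) : R :=
  (1 + P / L%:R * \sum_(j < K) vv M a i j) / (2 `^ (C / (M * L)%:R) - 1).

Definition vhat (R : realType) (M K L : nat) (P C : R) (a : nat -> nat -> R)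
  (tau : R) (i j : nat) : R :=
  tau * (P / L%:R) * (vv M a i j) ^+ 2 /
    (tau * (P / L%:R) * vv M a i j + 1 + sigma2 M K L P C a i).

Definition vtil (R : realType) (M K L : nat) (P C : R) (a : nat -> nat -> R)
  (tau : R) (i j : nat) : R :=
  vv M a i j * (1 + sigma2 M K L P C a i) /
    (tau * (P / L%:R) * vv M a i j + 1 + sigma2 M K L P C a i).

Definition vbar (R : realType) (M K L : nat) (P C : R) (a : nat -> nat -> R)
  (tau : R) (i j : nat) : R :=
  vhat M K L P C a tau i j /
    (1 + sigma2 M K L P C a i + P / L%:R * \sum_(l < K) vtil M K L P C a tau i l).

Definition Dmat (R : realType) (N M K L : nat) (P C : R) (a : nat -> nat -> R)
  (tau : R) (j : nat) : 'M[R]_N :=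
  diag_mx (\row_(i < N) vbar M K L P C a tau i j).

Definition T_eq (R : realType) (N K : nat) (D : nat -> 'M[R]_N)
  (t : 'I_N -> R[i] -> R[i]) (z : R[i]) : Prop :=
  let Tz : 'M[R[i]]_N := diag_mx (\row_(i < N) t i z) in
  let Dc (j : nat) : 'M[R[i]]_N := map_mx (fun x : R => x%:C) (D j) in
  let A : 'M[R[i]]_N :=
    (K%:R^-1) *: (\sum_(j < K) ((1 + K%:R^-1 * \tr (Dc j *m Tz))^-1 *: Dc j))
    - z%:M in
  A \in unitmx /\ Tz = invmx A.

Definition is_T_solution (R : realType) (N K : nat) (D : nat -> 'M[R]_N)
  (t : 'I_N -> R[i] -> R[i]) : Prop :=
  (forall i, in_S (t i)) /\ (forall z : R[i], notRplus z -> T_eq K D t z).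

(* T_P = T(-L/(KP)) as a real diagonal matrix (real parts; T_P is real). *)
Definition TPmat (R : realType) (N K L : nat) (P : R)
  (t : 'I_N -> R[i] -> R[i]) : 'M[R]_N :=
  diag_mx (\row_(i < N) complex.Re (t i ((- (L%:R / (K%:R * P)))%:C))).

Definition Rbar (R : realType) (N M K L : nat) (P C : R) (a : nat -> nat -> R)
  (t : R -> 'I_N -> R[i] -> R[i]) (tau : R) : R :=
  let TP := TPmat K L P (t tau) in
  let trj (j : nat) := K%:R^-1 * \tr (Dmat N M K L P C a tau j *m TP) in
  N%:R^-1 * (\sum_(j < K) ln (1 + trj j))
  - N%:R^-1 * ln (\det ((L%:R / (K%:R * P)) *: TP))
  - N%:R^-1 * (\sum_(j < K) (trj j / (1 + trj j))).

Definition strictly_concave_pos (R : realType) (f : R -> R) : Prop :=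
  forall x y lam : R, 0 < x -> 0 < y -> x != y -> 0 < lam < 1 ->
    lam * f x + (1 - lam) * f y < f (lam * x + (1 - lam) * y).

From HB Require Import structures.
From mathcomp Require Import all_boot all_order all_algebra.
From mathcomp Require Import complex.
From mathcomp Require Import all_classical all_reals all_analysis.
From mathcomp Require Import ring lra.

(* On the negative real axis every function of the class S is real and nonnegative, so
   T_P = diag(r_i) with r_i > 0 solving
     r_i (1/N sum_j vbar_ij / (1 + 1/N sum_l vbar_lj r_l) + s) = 1,   s = L/(KP).
   For a doubly regular matrix with common row and column mean x, comparing the largest and
   the smallest r_i with the constant solution shows that T_P = rho I, and then
   Rbar = Phi(al) with al = 1 + x rho and al (al - 1) = x / s.  As a function of
   w = al (al - 1), Phi is increasing and concave, while x(tau) = (Q / G(tau) - L/P) / N with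
   G(tau) = 1 + sum_l 1 / (tau + b_l), whose inverse is concave and injective. *)

Set Implicit Arguments.
Unset Strict Implicit.
Unset Printing Implicit Defensive.
Import Order.TTheory GRing.Theory Num.Theory.
Import numFieldNormedType.Exports.
Local Open Scope ring_scope.
Local Open Scope complex_scope.
Local Open Scope classical_set_scope.

Section ClassSOnNegativeAxis.
Variable R : realType.

Lemma normc_ge_Im (w : R[i]) : `|complex.Im w|%:C <= `|w|.
Proof.
by case: w => a b; simpc; rewrite -sqrtr_sqr ler_wsqrtr // lerDr sqr_ge0.
Qed.

Lemma cvg_Re T (F : set_system T) {FF : Filter F} (g : T -> CC R) (z : CC R) :
  g @ F --> z -> complex.Re (g x) @[x --> F] --> complex.Re z.
Proof.
move=> /cvgrPdist_lt gz; apply/cvgrPdist_lt => e e0.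
have /gz : (0 : CC R) < e%:C by rewrite ltcR.
apply: filterS => x; rewrite -ltcR; apply: le_lt_trans.
move: (g x) => w; clear gz; case: z w => a b [a' b'].
exact: (normc_ge_Re ((a - a') +i* (b - b'))).
Qed.

Lemma cvg_Im T (F : set_system T) {FF : Filter F} (g : T -> CC R) (z : CC R) :
  g @ F --> z -> complex.Im (g x) @[x --> F] --> complex.Im z.
Proof.
move=> /cvgrPdist_lt gz; apply/cvgrPdist_lt => e e0.
have /gz : (0 : CC R) < e%:C by rewrite ltcR.
apply: filterS => x; rewrite -ltcR; apply: le_lt_trans.
move: (g x) => w; clear gz; case: z w => a b [a' b'].
exact: (normc_ge_Im ((a - a') +i* (b - b'))).
Qed.

Lemma cvg_vertical (c : R) : (c +i* eps : CC R) @[eps --> 0^'+] --> (c%:C : CC R).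
Proof.
apply/cvgrPdist_lt => -[e e']; rewrite ltcE /= => /andP [/eqP -> e0].
near=> eps.
rewrite normc_def ltcR /= subrr expr0n add0r sub0r sqrrN sqrtr_sqr gtr0_norm.
  by near: eps; apply: nbhs_right_lt.
by near: eps; apply: nbhs_right_gt.
Unshelve. all: by end_near. Qed.

Lemma cvgr_ge0 T (F : set_system T) {FF : ProperFilter F} (g : T -> R) (l : R) :
  g @ F --> l -> (\forall x \near F, 0 < g x) -> 0 <= l.
Proof.
move=> gl g0; rewrite -(cvg_lim _ gl) //; apply: limr_ge; first by apply/cvg_ex; exists l.
by apply: filterS g0 => x /ltW.
Qed.

Lemma in_S_Rneg (f : R[i] -> R[i]) (c : R) : in_S f -> c < 0 ->
  complex.Im (f c%:C) = 0 /\ 0 <= complex.Re (f c%:C).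
Proof.
move=> [fd [fI _]] c0.
have fc : continuous_at (c%:C : CC R) (f : CC R -> CC R).
  apply/differentiable_continuous/derivable1_diffP/fd.
  by rewrite /notRplus /= => -[_]; rewrite leNgt c0.
have fv : (f (c +i* eps) : CC R) @[eps --> 0^'+] --> (f c%:C : CC R).
  exact: (continuous_cvg _ fc (@cvg_vertical c)).
have Re_cvg : complex.Re (f (c +i* eps)) @[eps --> 0^'+] --> complex.Re (f c%:C).
  exact: cvg_Re fv.
have Im_cvg : complex.Im (f (c +i* eps)) @[eps --> 0^'+] --> complex.Im (f c%:C).
  exact: cvg_Im fv.
(* [c + i eps] lies in the upper half plane, where [Im (z f z) = c Im (f z) + eps Re (f z)]. *)
have upper : \forall eps \near 0^'+, 0 < complex.Im (f (c +i* eps)) /\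
    0 < c * complex.Im (f (c +i* eps)) + eps * complex.Re (f (c +i* eps)).
  near=> eps; have eps0 : 0 < eps by near: eps; exact: nbhs_right_gt.
  by have := fI (c +i* eps) eps0; case: (f _).
have Im_ge0 : 0 <= complex.Im (f c%:C).
  by apply: (cvgr_ge0 Im_cvg); apply: filterS upper => ? [].
have cIm_cvg : c * complex.Im (f (c +i* eps)) + eps * complex.Re (f (c +i* eps))
    @[eps --> 0^'+] --> c * complex.Im (f c%:C).
  rewrite -[X in _ --> X]addr0 -[X in _ + X](mul0r (complex.Re (f c%:C))).
  apply: cvgD; first exact: cvgMr Im_cvg.
  by apply: cvgM Re_cvg; apply: cvg_at_right_filter; exact: cvg_id.
have cIm_ge0 : 0 <= c * complex.Im (f c%:C).
  by apply: (cvgr_ge0 cIm_cvg); apply: filterS upper => ? [].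
split.
  by apply/eqP; rewrite eq_le Im_ge0 andbT -(ler_nM2l c0) mulr0.
apply: (cvgr_ge0 Re_cvg).
near=> eps; have eps0 : 0 < eps by near: eps; exact: nbhs_right_gt.
have [I0 cI0] : 0 < complex.Im (f (c +i* eps)) /\
    0 < c * complex.Im (f (c +i* eps)) + eps * complex.Re (f (c +i* eps)) by near: eps.
rewrite -(pmulr_rgt0 _ eps0); nra.
Unshelve. all: by end_near. Qed.

End ClassSOnNegativeAxis.

Section FixedPointEquation.
Variable R : realType.

(* The diagonal of [1/K sum_j D_j / (1 + tr (D_j T) / K)] for [D_j = diag (v . j)] and
   [T = diag r]. *)
Definition Tmap (K N : nat) (v : nat -> nat -> R) (r : 'I_N -> R) (i : nat) : R :=
  K%:R^-1 * \sum_(j < K) (1 + K%:R^-1 * \sum_(l < N) v l j * r l)^-1 * v i j.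

Lemma T_eq_diag_real (K N : nat) (v : nat -> nat -> R) (t : 'I_N -> R[i] -> R[i])
    (c : R) (r : 'I_N -> R) :
  (forall i, t i c%:C = (r i)%:C) ->
  T_eq K (fun j => diag_mx (\row_(i < N) v i j)) t c%:C ->
  forall i, r i * (Tmap K v r i - c) = 1.
Proof.
move=> tr [A_unit TA] i.
set A := (X in X \in unitmx) in A_unit TA.
have T_real : diag_mx (\row_(i < N) t i c%:C) = diag_mx (\row_(i < N) (r i)%:C).
  by congr diag_mx; apply/rowP => k; rewrite !mxE tr.
have Aii : A i i = (Tmap K v r i - c)%:C.
  rewrite /A /Tmap T_real !mxE summxE eqxx mulr1n rmorphB rmorphM rmorph_sum fmorphV rmorph_nat.
  congr (_ * _ - _); apply: eq_bigr => j _.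
  rewrite !mxE eqxx mulr1n rmorphM fmorphV rmorphD rmorph1 rmorphM fmorphV rmorph_nat.
  congr ((1 + _ * _)^-1 * _); rewrite /mxtrace rmorph_sum; apply: eq_bigr => l _.
  by rewrite mul_mx_diag !mxE eqxx mulr1n rmorphM.
have := congr1 (fun B : 'M[R[i]]_N => B i i) (mulVmx A_unit).
rewrite -TA T_real mul_diag_mx mxE Aii !mxE eqxx mulr1n -rmorphM.
by move/(congr1 (@complex.Re R)).
Qed.

Lemma is_T_solution_Rneg (K N : nat) (v : nat -> nat -> R) (t : 'I_N -> R[i] -> R[i])
    (c : R) :
  c < 0 -> is_T_solution K (fun j => diag_mx (\row_(i < N) v i j)) t ->
  exists r : 'I_N -> R, [/\ forall i, 0 < r i, forall i, t i c%:C = (r i)%:C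
    & forall i, r i * (Tmap K v r i - c) = 1].
Proof.
move=> c0 [tS tT].
pose r i := complex.Re (t i c%:C).
have tr i : t i c%:C = (r i)%:C.
  by have [] := in_S_Rneg (tS i) c0; rewrite /r; case: (t i _) => u w /= ->.
have fixed_point := T_eq_diag_real tr (tT _ _).
have {}fixed_point : forall i, r i * (Tmap K v r i - c) = 1.
  by apply: fixed_point; rewrite /notRplus /= => -[_]; rewrite leNgt c0.
exists r; split=> // i; have [_ r_ge0] := in_S_Rneg (tS i) c0.
rewrite lt_neqAle r_ge0 andbT; apply/eqP => r0.
by have := fixed_point i; rewrite -r0 mul0r => /eqP; rewrite eq_sym oner_eq0.
Qed.

End FixedPointEquation.

Section ConstantFixedPoint.
Variable R : realType.

Lemma Tmap_le (K N : nat) (v : nat -> nat -> R) (r1 r2 : 'I_N -> R) (i : 'I_N) :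
  (forall (l : 'I_N) (j : 'I_K), 0 <= v l j) ->
  (forall l, 0 <= r1 l) -> (forall l, r1 l <= r2 l) ->
  Tmap K v r2 i <= Tmap K v r1 i.
Proof.
move=> v_ge0 r1_ge0 r12; rewrite ler_wpM2l ?invr_ge0 ?ler0n //.
apply: ler_sum => j _; rewrite ler_wpM2r // lef_pV2 ?posrE.
- rewrite lerD2l ler_wpM2l ?invr_ge0 ?ler0n //.
  by apply: ler_sum => l _; rewrite ler_wpM2l.
- rewrite ltr_pwDl // mulr_ge0 ?invr_ge0 ?ler0n // sumr_ge0 // => l _.
  by rewrite mulr_ge0 // (le_trans (r1_ge0 l)).
- by rewrite ltr_pwDl // mulr_ge0 ?invr_ge0 ?ler0n // sumr_ge0 // => l _; rewrite mulr_ge0.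
Qed.

Variables (N : nat) (v : nat -> nat -> R) (x : R).
Hypotheses (v_ge0 : forall i j : 'I_N, 0 <= v i j)
  (col_sum : forall j : 'I_N, \sum_(i < N) v i j = N%:R * x)
  (row_sum : forall i : 'I_N, \sum_(j < N) v i j = N%:R * x).

Lemma Tmap_cst (rho : R) (i : 'I_N) : Tmap N v (fun _ : 'I_N => rho) i = x / (1 + x * rho).
Proof.
have N_neq0 : N%:R != 0 :> R by rewrite pnatr_eq0 -lt0n (leq_ltn_trans _ (ltn_ord i)).
rewrite /Tmap (eq_bigr (fun j : 'I_N => (1 + x * rho)^-1 * v i j)) => [|j _].
  by rewrite -mulr_sumr row_sum mulrCA mulKf // mulrC.
by rewrite -mulr_suml col_sum -mulrA mulKf.
Qed.

Lemma lt_scalar_fixed_point (c r1 r2 : R) : 0 <= x -> c < 0 -> 0 < r1 -> r1 < r2 ->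
  r1 * (x / (1 + x * r1) - c) < r2 * (x / (1 + x * r2) - c).
Proof.
move=> x0 c0 r1_gt0 r12; have r2_gt0 := lt_trans r1_gt0 r12.
have d1 : 0 < 1 + x * r1 by rewrite ltr_pwDl // mulr_ge0 // ltW.
have d2 : 0 < 1 + x * r2 by rewrite ltr_pwDl // mulr_ge0 // ltW.
have frac r : 0 < 1 + x * r -> r * (x / (1 + x * r)) = 1 - (1 + x * r)^-1.
  by move=> d; field; rewrite gt_eqF.
rewrite !mulrBr !frac // -!addrA ltrD2l ler_ltD //.
  by rewrite lerN2 lef_pV2 ?posrE // lerD2l ler_wpM2l // ltW.
by rewrite ltrN2 ltr_nM2r.
Qed.

(* Comparing the largest and the smallest entry of [r] with the constant solution. *)
Lemma Tmap_fixed_point_cst (c : R) (r : 'I_N -> R) :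
  0 <= x -> c < 0 -> (forall i, 0 < r i) ->
  (forall i, r i * (Tmap N v r i - c) = 1) -> forall i j, r i = r j.
Proof.
move=> x0 c0 r_gt0 fixed_point i0.
have [iM _ rM] := @arg_maxP _ _ _ i0 xpredT r isT.
have [im _ rm] := @arg_minP _ _ _ i0 xpredT r isT.
have r_ge0 l : 0 <= r l by exact: ltW.
have le_rM : r iM * (x / (1 + x * r iM) - c) <= 1.
  rewrite -[X in _ <= X](fixed_point iM) ler_wpM2l // lerD2r -(Tmap_cst (r iM) iM).
  by apply: Tmap_le => // l; exact: rM.
have ge_rm : 1 <= r im * (x / (1 + x * r im) - c).
  rewrite -[X in X <= _](fixed_point im) ler_wpM2l // lerD2r -(Tmap_cst (r im) im).
  by apply: Tmap_le => // l; exact: rm.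
have rMm : r iM <= r im.
  rewrite leNgt; apply/negP => /(lt_scalar_fixed_point x0 c0 (r_gt0 im)).
  by apply/negP; rewrite -leNgt (le_trans le_rM ge_rm).
have eq_rM l : r l = r iM.
  by apply/eqP; rewrite eq_le; apply/andP; split; [exact: rM | exact: le_trans rMm (rm _ _)].
by move=> j; rewrite !eq_rM.
Qed.

End ConstantFixedPoint.

Section RateFunction.
Variable R : realType.
Implicit Types a b : R.

Lemma ln_lt_subr1 (x : R) : 0 < x -> x != 1 -> ln x < x - 1.
Proof.
move=> x0 x1; have := @expR_gt1Dx R (ln x).
by rewrite lnK ?posrE // ln_eq0 // => /(_ x1); lra.
Qed.

Lemma comb_gt0 (x y lam : R) : 0 < x -> 0 < y -> 0 <= lam <= 1 ->
  0 < lam * x + (1 - lam) * y.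
Proof. by move=> x0 y0 /andP [l0 l1]; nra. Qed.

(* At a scalar fixed point [rho] of the deterministic equivalent, with [al = 1 + x rho],
   the rate is [Phi al]. *)
Definition Phi a := 2 * ln a - (a - 1) / a.

Lemma Phi_tangent_gap a b : 1 <= a -> 1 <= b ->
  2 * (a / b - 1) - (a - 1) / a + (b - 1) / b - (a * (a - 1) - b * (b - 1)) / b ^+ 2 <= 0.
Proof.
move=> a1 b1; have a0 : a != 0 by rewrite gt_eqF //; lra.
have b0 : b != 0 by rewrite gt_eqF //; lra.
have -> : 2 * (a / b - 1) - (a - 1) / a + (b - 1) / b - (a * (a - 1) - b * (b - 1)) / b ^+ 2
   = ((a - b) ^+ 2 * (1 - a)) * (a * b ^+ 2)^-1 by field; rewrite a0 b0.
apply: mulr_le0_ge0; last by rewrite invr_ge0 mulr_ge0 ?sqr_ge0 //; lra.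
by apply: mulr_ge0_le0; [exact: sqr_ge0 | lra].
Qed.

(* Viewed as a function of [w = a (a - 1)], [Phi] is concave with slope [1 / a^2]. *)
Lemma Phi_tangent a b : 1 <= a -> 1 <= b ->
  Phi a <= Phi b + (a * (a - 1) - b * (b - 1)) / b ^+ 2 ?= iff (a == b).
Proof.
move=> a1 b1; have a0 : 0 < a by lra. have b0 : 0 < b by lra.
have gap := Phi_tangent_gap a1 b1.
case: eqVneq => [-> | ab]; first by apply/leifP; rewrite subrr mul0r addr0.
have ab1 : a / b != 1.
  apply: contra ab => /eqP ab1; apply/eqP.
  by rewrite -[a](divfK (x := b)) ?ab1 ?mul1r // gt_eqF.
apply/leifP; have := ln_lt_subr1 (divr_gt0 a0 b0) ab1.
rewrite ln_div ?posrE // /Phi; lra.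
Qed.

Lemma Phi_lt_comb a1 a2 am lam : 1 <= a1 -> 1 <= a2 -> 1 <= am -> a1 != a2 ->
  0 < lam < 1 ->
  lam * (a1 * (a1 - 1)) + (1 - lam) * (a2 * (a2 - 1)) <= am * (am - 1) ->
  lam * Phi a1 + (1 - lam) * Phi a2 < Phi am.
Proof.
move=> a1_ge1 a2_ge1 am_ge1 a12 /andP [lam0 lam1] w_le.
have am0 : am != 0 by rewrite gt_eqF //; lra.
pose w a := a * (a - 1).
have {}w_le : lam * w a1 + (1 - lam) * w a2 <= w am := w_le.
have slope_le0 : lam * ((w a1 - w am) / am ^+ 2) + (1 - lam) * ((w a2 - w am) / am ^+ 2) <= 0.
  have -> : lam * ((w a1 - w am) / am ^+ 2) + (1 - lam) * ((w a2 - w am) / am ^+ 2)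
     = (lam * w a1 + (1 - lam) * w a2 - w am) / am ^+ 2 by field.
  by rewrite pmulr_lle0 ?invr_gt0 ?exprn_gt0 ?subr_le0 //; lra.
have [t1 t2] := (Phi_tangent a1_ge1 am_ge1, Phi_tangent a2_ge1 am_ge1).
have lam0' : 0 < 1 - lam by lra.
rewrite /w in slope_le0.
case: (eqVneq a1 am) => [e1 | n1].
  have n2 : a2 != am by rewrite -e1 eq_sym.
  move: t2 => /lt_leif; rewrite n2 => t2.
  have := ler_wpM2l (ltW lam0) (leif_le t1); rewrite -(ltr_pM2l lam0') in t2; lra.
move: t1 => /lt_leif; rewrite n1 => t1.
have := ler_wpM2l (ltW lam0') (leif_le t2); rewrite -(ltr_pM2l lam0) in t1; lra.
Qed.

End RateFunction.

Section HarmonicSum.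
Variable R : realType.

Definition hsum n (b : 'I_n -> R) (t : R) := 1 + \sum_(l < n) (t + b l)^-1.

Lemma hsum_ge1 n (b : 'I_n -> R) t : (forall l, 0 < b l) -> 0 <= t -> 1 <= hsum b t.
Proof.
move=> b0 t0; rewrite /hsum lerDl; apply: sumr_ge0 => l _.
by rewrite invr_ge0 ltW // ltr_wpDl.
Qed.

Lemma tangent_sq_le (u t Y Z : R) : 0 < Y -> 0 < Z ->
  2 * t * u / Z - t ^+ 2 * Y / Z ^+ 2 <= u ^+ 2 / Y.
Proof.
move=> Y0 Z0; rewrite -subr_ge0.
have -> : u ^+ 2 / Y - (2 * t * u / Z - t ^+ 2 * Y / Z ^+ 2)
    = (u * Z - t * Y) ^+ 2 * (Y * Z ^+ 2)^-1 by field; rewrite !gt_eqF.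
by rewrite mulr_ge0 ?sqr_ge0 // invr_ge0 mulr_ge0 ?sqr_ge0 // ltW.
Qed.

(* The right-hand side is affine in [tau] and equals [(hsum b taum)^-1] at [tau = taum]. *)
Lemma inv_hsum_le_tangent n (b : 'I_n -> R) (tau taum : R) :
  (forall l, 0 < b l) -> 0 < tau -> 0 < taum ->
  (hsum b tau)^-1 <= (hsum b taum)^-1 ^+ 2 * (1 + \sum_(l < n) (tau + b l) / (taum + b l) ^+ 2).
Proof.
move=> b0 t0 tm0.
set u := (hsum b tau)^-1; set t := (hsum b taum)^-1.
set SY := \sum_(l < n) (tau + b l)^-1.
set SZ := \sum_(l < n) (taum + b l)^-1.
set SQ := \sum_(l < n) (tau + b l) / (taum + b l) ^+ 2.
have G1 := hsum_ge1 b0 (ltW t0); have G2 := hsum_ge1 b0 (ltW tm0).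
have eu : u * (1 + SY) = 1 by rewrite /u mulVf // gt_eqF //; lra.
have et : t * (1 + SZ) = 1 by rewrite /t mulVf // gt_eqF //; lra.
have hs : 2 * t * u * SZ - t ^+ 2 * SQ <= u ^+ 2 * SY.
  rewrite /SZ /SQ /SY !mulr_sumr -sumrB; apply: ler_sum => l _.
  have Y0 : 0 < tau + b l by rewrite ltr_wpDl // ltW.
  have Z0 : 0 < taum + b l by rewrite ltr_wpDl // ltW.
  by rewrite !mulrA; apply: tangent_sq_le.
have h0 : 2 * t * u - t ^+ 2 <= u ^+ 2.
  have := sqr_ge0 (u - t); rewrite sqrrB; lra.
have e1 : u ^+ 2 * SY + u ^+ 2 = u.
  by rewrite -[RHS]mulr1 -eu expr2; ring.
have e2 : 2 * t * u * SZ + 2 * t * u = 2 * u.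
  by rewrite -[RHS]mulr1 -et; ring.
have e3 : t ^+ 2 * (1 + SQ) = t ^+ 2 + t ^+ 2 * SQ by ring.
rewrite e3; lra.
Qed.

Lemma inv_hsum_concave n (b : 'I_n -> R) (t1 t2 lam : R) :
  (forall l, 0 < b l) -> 0 < t1 -> 0 < t2 -> 0 <= lam <= 1 ->
  lam * (hsum b t1)^-1 + (1 - lam) * (hsum b t2)^-1 <= (hsum b (lam * t1 + (1 - lam) * t2))^-1.
Proof.
move=> b0 t10 t20 lam01; have tm0 := comb_gt0 t10 t20 lam01.
case/andP: lam01 => l0 l1; set tm := lam * t1 + (1 - lam) * t2 in tm0 *.
have B1 := inv_hsum_le_tangent b0 t10 tm0.
have B2 := inv_hsum_le_tangent b0 t20 tm0.
set t := (hsum b tm)^-1 in B1 B2 *.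
have G2 := hsum_ge1 b0 (ltW tm0).
have et : t * hsum b tm = 1 by rewrite /t mulVf // gt_eqF //; lra.
have key : lam * (1 + \sum_(l < n) (t1 + b l) / (tm + b l) ^+ 2)
   + (1 - lam) * (1 + \sum_(l < n) (t2 + b l) / (tm + b l) ^+ 2) = hsum b tm.
  rewrite /hsum !mulrDr !mulr1 !mulr_sumr addrACA -big_split /=.
  have -> : lam + (1 - lam) = 1 by ring.
  congr (_ + _); apply: eq_bigr => l _.
  have Z0 : tm + b l != 0 by rewrite gt_eqF // ltr_wpDl // ltW.
  rewrite /tm; field.
  by rewrite /tm in Z0.
have l0' : 0 <= 1 - lam by lra.
have := ler_wpM2l l0 B1; have := ler_wpM2l l0' B2.
have H : lam * (t ^+ 2 * (1 + \sum_(l < n) (t1 + b l) / (tm + b l) ^+ 2))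
   + (1 - lam) * (t ^+ 2 * (1 + \sum_(l < n) (t2 + b l) / (tm + b l) ^+ 2))
   = t ^+ 2 * (lam * (1 + \sum_(l < n) (t1 + b l) / (tm + b l) ^+ 2)
   + (1 - lam) * (1 + \sum_(l < n) (t2 + b l) / (tm + b l) ^+ 2)) by ring.
have e' : t * t * hsum b tm = t by rewrite -mulrA et mulr1.
rewrite key expr2 e' in H.
lra.
Qed.

Lemma hsum_lt n (b : 'I_n -> R) (t1 t2 : R) : (0 < n)%N -> (forall l, 0 < b l) ->
  0 < t1 -> t1 < t2 -> hsum b t2 < hsum b t1.
Proof.
move=> n0 b0 t10 t12; rewrite /hsum ltrD2l.
apply: ltr_sum; first by apply/hasP; exists (Ordinal n0); rewrite ?mem_index_enum.
move=> l _; rewrite ltf_pV2 ?posrE ?ltrD2r //.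
  by rewrite ltr_wpDl // ltW // (lt_trans t10).
by rewrite ltr_wpDl // ltW.
Qed.

Lemma inv_hsum_inj n (b : 'I_n -> R) (t1 t2 : R) : (0 < n)%N -> (forall l, 0 < b l) ->
  0 < t1 -> 0 < t2 -> t1 != t2 -> (hsum b t1)^-1 != (hsum b t2)^-1.
Proof.
move=> n0 b0 t10 t20; rewrite (inj_eq invr_inj); case: (ltgtP t1 t2) => // t12 _.
  by rewrite gt_eqF // hsum_lt.
by rewrite lt_eqF // hsum_lt.
Qed.

Lemma vbar_row_sum_hsum (N : nat) (v : nat -> R) (p sg tau : R) :
  0 < p -> 0 <= sg -> 0 < tau -> (forall j : 'I_N, 0 < v j) ->
  \sum_(j < N) ((tau * p * v j ^+ 2 / (tau * p * v j + 1 + sg)) /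
     (1 + sg + p * \sum_(l < N) (v l * (1 + sg) / (tau * p * v l + 1 + sg))))
  = (\sum_(j < N) p * v j + (1 + sg)) / (p * (1 + sg)) *
      (hsum (fun l : 'I_N => (1 + sg) / (p * v l)) tau)^-1 - p^-1.
Proof.
move=> p0 sg0 t0 v0; set c := 1 + sg; have c0 : 0 < c by rewrite /c; lra.
set G := hsum _ tau.
have G1 : 1 <= G by apply: hsum_ge1 (ltW t0) => l; rewrite divr_gt0 ?mulr_gt0.
have eD : c + p * \sum_(l < N) (v l * c / (tau * p * v l + 1 + sg)) = c * G.
  rewrite /G /hsum mulrDr mulr1 !mulr_sumr; congr (_ + _); apply: eq_bigr => l _.
  have vl0 := v0 l; rewrite -addrA -/c; field.
  by rewrite !gt_eqF // addr_gt0 // !mulr_gt0.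
rewrite -big_distrl /= eD.
have eN : \sum_(j < N) (tau * p * v j ^+ 2 / (tau * p * v j + 1 + sg)) =
     p^-1 * (\sum_(j < N) p * v j - c * (G - 1)).
  rewrite /G /hsum addrAC subrr add0r mulr_sumr -sumrB mulr_sumr; apply: eq_bigr => j _.
  have vj0 := v0 j; rewrite -addrA -/c; field.
  by rewrite !gt_eqF // addr_gt0 // !mulr_gt0.
rewrite eN; field.
by rewrite !gt_eqF //; lra.
Qed.

End HarmonicSum.

Section Model.
Variables (R : realType) (B M N L : nat) (P C : R) (a : nat -> nat -> R).
Hypotheses (B_gt0 : (0 < B)%N) (M_gt0 : (0 < M)%N) (L_gt0 : (0 < L)%N)
  (N_BM : N = (B * M)%N) (P_gt0 : 0 < P) (C_gt0 : 0 < C)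
  (a_gt0 : forall b k, (b < B)%N -> (k < N)%N -> 0 < a b k).

Lemma N_gt0 : (0 < N)%N.
Proof. by rewrite N_BM muln_gt0 B_gt0 M_gt0. Qed.

Lemma PL_gt0 : 0 < P / L%:R.
Proof. by rewrite divr_gt0 // ltr0n. Qed.

Lemma LNP_gt0 : 0 < L%:R / (N%:R * P).
Proof. by rewrite divr_gt0 ?mulr_gt0 // ltr0n // N_gt0. Qed.

Lemma vv_gt0 i j : (i < N)%N -> (j < N)%N -> 0 < vv M a i j.
Proof. by move=> iN jN; apply: a_gt0; rewrite // ltn_divLR // -N_BM. Qed.

Lemma powR_gt1 (b y : R) : 1 < b -> 0 < y -> 1 < b `^ y.
Proof.
move=> b1 y0; rewrite /powR gt_eqF ?(lt_trans ltr01) //.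
by rewrite expR_gt1 mulr_gt0 // ln_gt0.
Qed.

Lemma sigma2_gt0 i : (i < N)%N -> 0 < sigma2 M N L P C a i.
Proof.
move=> iN; rewrite /sigma2 divr_gt0 //.
  rewrite ltr_pwDl // mulr_ge0 ?(ltW PL_gt0) // sumr_ge0 // => j _.
  exact/ltW/vv_gt0.
by rewrite subr_gt0 powR_gt1 ?ltr1n // divr_gt0 // ltr0n muln_gt0 M_gt0.
Qed.

Lemma vbar_gt0 tau i j : 0 < tau -> (i < N)%N -> (j < N)%N ->
  0 < vbar M N L P C a tau i j.
Proof.
move=> tau0 iN jN; have sg0 := sigma2_gt0 iN.
have tpv_gt0 l : (l < N)%N -> 0 < tau * (P / L%:R) * vv M a i l.
  by move=> lN; apply: mulr_gt0 (vv_gt0 iN lN); exact: mulr_gt0 tau0 PL_gt0.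
have vtil_ge0 : 0 <= \sum_(l < N) vtil M N L P C a tau i l.
  apply: sumr_ge0 => l _; have tpv := tpv_gt0 _ (ltn_ord l).
  rewrite /vtil ltW // divr_gt0 //; last lra.
  by rewrite mulr_gt0 ?vv_gt0 //; lra.
rewrite /vbar /vhat !divr_gt0 //.
- by rewrite expr2 mulrA mulr_gt0 ?tpv_gt0 ?vv_gt0.
- by have := tpv_gt0 _ jN; lra.
- by have := mulr_ge0 (ltW PL_gt0) vtil_ge0; lra.
Qed.

Definition mean_vbar tau := N%:R^-1 * \sum_(j < N) vbar M N L P C a tau 0 j.

Lemma mean_vbar_ge0 tau : 0 < tau -> 0 <= mean_vbar tau.
Proof.
move=> tau0; rewrite mulr_ge0 ?invr_ge0 ?ler0n // sumr_ge0 // => j _.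
by rewrite ltW // vbar_gt0 // N_gt0.
Qed.

Lemma mean_vbar_hsum : exists (Q : R) (b : 'I_N -> R), [/\ 0 < Q, forall l, 0 < b l &
  forall tau, 0 < tau -> mean_vbar tau = N%:R^-1 * (Q * (hsum b tau)^-1 - (P / L%:R)^-1)].
Proof.
have N0 := N_gt0; have p0 := PL_gt0; have sg0 := sigma2_gt0 N0.
set p := P / L%:R in p0 *; set sg := sigma2 M N L P C a 0 in sg0 *.
have v0 (l : 'I_N) : 0 < vv M a 0 l by exact: vv_gt0.
exists ((\sum_(j < N) p * vv M a 0 j + (1 + sg)) / (p * (1 + sg))).
exists (fun l => (1 + sg) / (p * vv M a 0 l)); split.
- have : 0 <= \sum_(j < N) p * vv M a 0 j.
    by apply: sumr_ge0 => j _; exact: ltW (mulr_gt0 p0 (v0 j)).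
  by move=> ?; apply: divr_gt0; [lra | apply: mulr_gt0 p0 _; lra].
- by move=> l; apply: divr_gt0 (mulr_gt0 p0 (v0 l)); lra.
- move=> tau tau0; rewrite /mean_vbar; congr (_ * _).
  exact: vbar_row_sum_hsum p0 (ltW sg0) tau0 v0.
Qed.

Lemma mean_vbar_concave x y lam : 0 < x -> 0 < y -> 0 <= lam <= 1 ->
  lam * mean_vbar x + (1 - lam) * mean_vbar y <= mean_vbar (lam * x + (1 - lam) * y).
Proof.
move=> x0 y0 lam01; have [Q [b [Q0 b0 mE]]] := mean_vbar_hsum.
rewrite !mE ?comb_gt0 // -subr_ge0.
have := ler_wpM2l (ltW Q0) (inv_hsum_concave b0 x0 y0 lam01).
set u1 := (hsum b x)^-1; set u2 := (hsum b y)^-1; set um := (hsum b _)^-1.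
rewrite -subr_ge0 => le_um; set k := (P / L%:R)^-1.
have -> : N%:R^-1 * (Q * um - k) - (lam * (N%:R^-1 * (Q * u1 - k))
    + (1 - lam) * (N%:R^-1 * (Q * u2 - k)))
  = N%:R^-1 * (Q * um - Q * (lam * u1 + (1 - lam) * u2)) by ring.
by rewrite mulr_ge0 ?invr_ge0 ?ler0n.
Qed.

Lemma mean_vbar_inj x y : 0 < x -> 0 < y -> x != y -> mean_vbar x != mean_vbar y.
Proof.
move=> x0 y0 xy; have [Q [b [Q0 b0 mE]]] := mean_vbar_hsum; rewrite !mE //.
have N0 : N%:R^-1 != 0 :> R by rewrite invr_eq0 pnatr_eq0 -lt0n N_gt0.
apply: contra (inv_hsum_inj N_gt0 b0 x0 y0 xy) => /eqP /(mulfI N0) /addIr /(mulfI _).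
by move=> inj; apply/eqP/inj; rewrite gt_eqF.
Qed.

Variable t : R -> 'I_N -> R[i] -> R[i].
Hypotheses (vbar_regular : forall tau : R, 0 < tau -> exists Kt : R,
      (forall k : 'I_N, Kt = N%:R^-1 * \sum_(i < N) vbar M N L P C a tau i k)
      /\ (forall l : 'I_N, Kt = N%:R^-1 * \sum_(j < N) vbar M N L P C a tau l j))
  (t_solution : forall tau : R, 0 < tau -> is_T_solution N (Dmat N M N L P C a tau) (t tau)).

Lemma vbar_sums tau : 0 < tau ->
  (forall j : 'I_N, \sum_(i < N) vbar M N L P C a tau i j = N%:R * mean_vbar tau) /\
  (forall i : 'I_N, \sum_(j < N) vbar M N L P C a tau i j = N%:R * mean_vbar tau).
Proof.
move=> tau0; have [Kt [col row]] := vbar_regular tau0.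
have N0 : N%:R != 0 :> R by rewrite pnatr_eq0 -lt0n N_gt0.
have <- : Kt = mean_vbar tau := row (Ordinal N_gt0).
by split=> k; [rewrite (col k) | rewrite (row k)]; rewrite mulVKf.
Qed.

Lemma TP_scalar tau : 0 < tau -> exists2 rho, 0 < rho &
  TPmat N L P (t tau) = diag_mx (\row_(i < N) rho) /\
  rho * (mean_vbar tau / (1 + mean_vbar tau * rho) + L%:R / (N%:R * P)) = 1.
Proof.
move=> tau0; set s := L%:R / (N%:R * P).
have [r [r_gt0 tr fixed_point]] :
    exists r, [/\ forall i, 0 < r i, forall i, t tau i (- s)%:C = (r i)%:C
      & forall i, r i * (Tmap N (vbar M N L P C a tau) r i - - s) = 1].
  by apply: is_T_solution_Rneg (t_solution tau0); rewrite oppr_lt0 LNP_gt0.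
have [col row] := vbar_sums tau0.
have vbar_ge0 (i j : 'I_N) : 0 <= vbar M N L P C a tau i j by rewrite ltW // vbar_gt0.
have s_neg : - s < 0 by rewrite oppr_lt0 LNP_gt0.
have r_cst := Tmap_fixed_point_cst vbar_ge0 col row (mean_vbar_ge0 tau0) s_neg r_gt0
  fixed_point.
pose i0 := Ordinal N_gt0; exists (r i0) => //; split.
  by congr diag_mx; apply/rowP => i; rewrite !mxE tr (r_cst i i0).
have := fixed_point i0.
rewrite (_ : r = fun=> r i0) ?(Tmap_cst col row) ?opprK //.
by apply: funext => i; exact: r_cst.
Qed.

Lemma tr_diag_mul n (f g : 'I_n -> R) :
  \tr (diag_mx (\row_i f i) *m diag_mx (\row_i g i)) = \sum_i f i * g i.
Proof. by apply: eq_bigr => i _; rewrite mul_mx_diag !mxE eqxx mulr1n. Qed.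

Lemma Rbar_Phi tau : 0 < tau -> exists al, [/\ 1 <= al,
  al * (al - 1) = mean_vbar tau / (L%:R / (N%:R * P)) & Rbar M N L P C a t tau = Phi al].
Proof.
move=> tau0; have [rho rho0 [TP fixed_point]] := TP_scalar tau0.
have s0 := LNP_gt0; set s := L%:R / (N%:R * P) in s0 fixed_point *.
have x0 := mean_vbar_ge0 tau0; set x := mean_vbar tau in x0 fixed_point *.
have N0 : N%:R != 0 :> R by rewrite pnatr_eq0 -lt0n N_gt0.
have xrho0 : 0 <= x * rho by rewrite mulr_ge0 // ltW.
set al := 1 + x * rho in fixed_point *.
have al_ge1 : 1 <= al by rewrite /al lerDl.
have al0 : al != 0 by rewrite gt_eqF // (lt_le_trans ltr01).
have srho : s * rho = al^-1.
  have -> : s * rho = 1 - rho * (x / al) by rewrite -fixed_point; ring.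
  by rewrite /al; field; rewrite -/al.
exists al; split=> //.
  have -> : s = (al * rho)^-1 by rewrite invfM -srho mulfK // gt_eqF.
  by rewrite /al; field; rewrite gt_eqF.
have [col _] := vbar_sums tau0.
have tr_rho (j : 'I_N) :
    N%:R^-1 * \tr (Dmat N M N L P C a tau j *m diag_mx (\row_(i < N) rho)) = x * rho.
  by rewrite /Dmat tr_diag_mul -mulr_suml col -mulrA mulKf.
rewrite /Rbar /= TP; under eq_bigr do rewrite tr_rho.
under [X in _ - N%:R^-1 * X]eq_bigr do rewrite tr_rho.
rewrite !sumr_const card_ord -/s detZ det_diag.
under eq_bigr do rewrite mxE.
rewrite prodr_const card_ord -exprMn (lnXn _ (mulr_gt0 s0 rho0)) srho.
rewrite lnV ?posrE ?invr_gt0 ?(lt_le_trans ltr01) //.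
have N_mean (c : R) : N%:R^-1 * (c *+ N) = c by rewrite -(mulr_natr c N) mulrC mulfK.
rewrite !N_mean /Phi -/al.
have -> : al - 1 = x * rho by rewrite /al; ring.
lra.
Qed.

Lemma Rbar_strictly_concave : strictly_concave_pos (Rbar M N L P C a t).
Proof.
move=> x y lam x0 y0 xy lam01.
have lam01' : 0 <= lam <= 1 by case/andP: lam01 => l0 l1; rewrite !ltW.
have [a1 [a1_ge1 w1 ->]] := Rbar_Phi x0.
have [a2 [a2_ge1 w2 ->]] := Rbar_Phi y0.
have [am [am_ge1 wm ->]] := Rbar_Phi (comb_gt0 x0 y0 lam01').
apply: Phi_lt_comb => //.
  apply: contra (mean_vbar_inj x0 y0 xy) => /eqP a12; apply/eqP.
  by apply: (mulIf (invr_neq0 (lt0r_neq0 LNP_gt0))); rewrite -w1 -w2 a12.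
have := mean_vbar_concave x0 y0 lam01'; rewrite w1 w2 wm.
move: (mean_vbar x) (mean_vbar y) (mean_vbar _) => mx my mm concave.
by rewrite !mulrA -mulrDl ler_wpM2r ?invr_ge0 ?(ltW LNP_gt0).
Qed.

End Model.

Theorem theorem3 (R : realType) (B M K L N : nat) (P C : R)
  (a : nat -> nat -> R)
  (hB : (0 < B)%N) (hM : (0 < M)%N) (hK : (0 < K)%N) (hL : (0 < L)%N)
  (hN1 : N = (B * M)%N) (hN2 : N = K)
  (hP : 0 < P) (hC : 0 < C)
  (ha : forall b k, (b < B)%N -> (k < K)%N -> 0 < a b k)
  (hreg : forall tau : R, 0 < tau -> exists Kt : R,
      (forall k : 'I_N, Kt = N%:R^-1 * \sum_(i < N) vbar M K L P C a tau i k)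
      /\ (forall l : 'I_N, Kt = N%:R^-1 * \sum_(j < N) vbar M K L P C a tau l j))
  (t : R -> 'I_N -> R[i] -> R[i])
  (ht : forall tau : R, 0 < tau ->
      is_T_solution K (Dmat N M K L P C a tau) (t tau)) :
  strictly_concave_pos (Rbar M K L P C a t).
Proof.
subst K.
exact: (Rbar_strictly_concave hB hM hL hN1 hP hC ha hreg ht).
Qed.
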